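(* Let $n_x\ge1$, $t\ge 0$, and let $\bm{M}_0,\dots,\bm{M}_t$ and $\widehat{\bm{Q}}$ be $n_x\times n_x$ symmetric positive definite matrices such that the ellipsoid $\widehat{\mathcal{E}}=\mathcal{E}(\bm{0},\widehat{\bm{Q}})$ contains the Minkowski sum $\mathcal{X}=\mathcal{E}(\bm{0},\bm{M}_0)+\cdots+\mathcal{E}(\bm{0},\bm{M}_t)$. Let $\delta_{\mathrm{H}}$ be the Hausdorff distance between $\mathcal{X}$ and $\widehat{\mathcal{E}}$, which equals $$\delta_{\mathrm{H}}=\sup_{\bm{s}\in\mathcal{S}^{n_x-1}}\left(\big\|\widehat{\bm{Q}}^{1/2}\bm{s}\big\|_2-\sum_{k=0}^{t}\big\|\bm{M}_k^{1/2}\bm{s}\big\|_2\right).$$ Then $$\delta_{\mathrm{H}}\leq\Big\|\widehat{\bm{Q}}^{1/2}-\sum_{k=0}^{t}\bm{M}_k^{1/2}\Big\|_2,$$ where $\|\cdot\|_2$ on matrices denotes the spectral (operator 2-) norm.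
   Context: $\mathcal{E}(\bm{0},\bm{Q})=\{\bm{x}\in\mathbb{R}^{n_x}:\bm{x}^\top\bm{Q}^{-1}\bm{x}\le1\}$ for symmetric positive definite $\bm{Q}$. $\mathcal{S}^{n_x-1}$ is the Euclidean unit sphere in $\mathbb{R}^{n_x}$, and $\bm{A}^{1/2}$ is the symmetric positive definite square root. The Hausdorff distance is $\max\{\sup_{\bm{x}\in\mathcal{X}}\inf_{\bm{y}\in\widehat{\mathcal{E}}}\|\bm{x}-\bm{y}\|_2,\ \sup_{\bm{y}\in\widehat{\mathcal{E}}}\inf_{\bm{x}\in\mathcal{X}}\|\bm{x}-\bm{y}\|_2\}$. In the paper, $\mathcal{X}$ is the reach set at time $t$ of the linear system $\bm{x}(t+1)=\bm{F}\bm{x}(t)+\bm{G}\bm{u}(t)$ with ellipsoidal initial-condition and control sets centered at the origin, with $\bm{M}_t=\bm{F}^t\bm{Q}_0(\bm{F}^\top)^t$ and $\bm{M}_k=\bm{F}^{t-k-1}\bm{G}\bm{U}\bm{G}^\top(\bm{F}^\top)^{t-k-1}$ for $k<t$, and $\widehat{\bm{Q}}$ is the shape matrix of an outer ellipsoidal approximation of it. *)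

From HB Require Import structures.
From mathcomp Require Import all_boot all_order all_algebra.
From mathcomp Require Import classical_sets reals.
Set Implicit Arguments. Unset Strict Implicit. Unset Printing Implicit Defensive.
Import Order.TTheory GRing.Theory Num.Theory.
Local Open Scope ring_scope.
Local Open Scope classical_set_scope.

Section Defs.
Variable R : realType.

Definition vnorm (n : nat) (x : 'cV[R]_n) : R := Num.sqrt (\sum_i x i 0 ^+ 2).

Definition qform (n : nat) (A : 'M[R]_n) (x : 'cV[R]_n) : R := (x^T *m A *m x) 0 0.

Definition spd (n : nat) (A : 'M[R]_n) : Prop :=
  A^T = A /\ forall x : 'cV[R]_n, x != 0 -> 0 < qform A x.

Definition is_sqrtm (n : nat) (A B : 'M[R]_n) : Prop := spd B /\ B *m B = A.

Definition ellipsoid (n : nat) (Q : 'M[R]_n) : set 'cV[R]_n :=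
  [set x | qform (invmx Q) x <= 1].

Definition minkowski_ellipsoids (n t : nat) (M : 'I_t.+1 -> 'M[R]_n) : set 'cV[R]_n :=
  [set x | exists y : 'I_t.+1 -> 'cV[R]_n,
     (forall k, ellipsoid (M k) (y k)) /\ x = \sum_k y k].

Definition spec_norm (n : nat) (A : 'M[R]_n) : R :=
  sup [set vnorm (A *m x) | x in [set x : 'cV[R]_n | vnorm x = 1]].

Definition dist_pt_set (n : nat) (x : 'cV[R]_n) (B : set 'cV[R]_n) : R :=
  inf [set vnorm (x - y) | y in B].

Definition hausdorff (n : nat) (A B : set 'cV[R]_n) : R :=
  Num.max (sup [set dist_pt_set x B | x in A]) (sup [set dist_pt_set y A | y in B]).

End Defs.

(** Since [X] is contained in [Ê], only the distance from points of [Ê] to [X]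
    matters.  A point of [Ê] is [Q^{1/2} u] with [|u| <= 1], and
    [sum_k M_k^{1/2} u] lies in [X]; their difference is
    [(Q^{1/2} - sum_k M_k^{1/2}) u], whose norm is at most the spectral norm. *)

From HB Require Import structures.
From mathcomp Require Import all_boot all_order all_algebra.
From mathcomp Require Import classical_sets reals.
From mathcomp Require Import lra.
Set Implicit Arguments.
Unset Strict Implicit.
Unset Printing Implicit Defensive.
Import Order.TTheory GRing.Theory Num.Theory.
Local Open Scope ring_scope.
Local Open Scope classical_set_scope.

Lemma sum_sqr_le_sqr_sum_norm (R : realDomainType) (I : finType) (f : I -> R) :
  \sum_i f i ^+ 2 <= (\sum_i `|f i|) ^+ 2.
Proof.
suff [] : \sum_i f i ^+ 2 <= (\sum_i `|f i|) ^+ 2 /\ 0 <= \sum_i `|f i| by [].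
apply: (big_rec2 (fun a b => a <= b ^+ 2 /\ 0 <= b)); first by rewrite expr0n.
move=> i a b _ [le_ab b_ge0]; split; last by rewrite addr_ge0.
have fi_ge0 : 0 <= `|f i| by [].
rewrite -(real_normK (num_real (f i))); nra.
Qed.

Lemma sup_le_ge0 (R : realType) (S : set R) (c : R) :
  0 <= c -> ubound S c -> sup S <= c.
Proof.
move=> c_ge0 ubS; have [->|S_neq0] := eqVneq S set0; first by rewrite sup0.
by apply: ge_sup => //; apply/set0P.
Qed.

Section Norms.
Variables (R : realType) (n : nat).
Implicit Types (x u : 'cV[R]_n) (A P Q : 'M[R]_n).

Lemma vnorm_ge0 x : 0 <= vnorm x.
Proof. exact: sqrtr_ge0. Qed.

Lemma vnorm0 : vnorm (0 : 'cV[R]_n) = 0.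
Proof. by rewrite /vnorm big1 ?sqrtr0 // => i _; rewrite mxE expr0n. Qed.

Lemma vnorm_sqr x : vnorm x ^+ 2 = (x^T *m x) 0 0.
Proof.
rewrite sqr_sqrtr ?sumr_ge0 // => [|i _]; last exact: sqr_ge0.
by rewrite mxE; apply: eq_bigr => i _; rewrite mxE expr2.
Qed.

Lemma vnorm_eq0 x : vnorm x = 0 -> x = 0.
Proof.
move=> /eqP; rewrite sqrtr_eq0 => sum_le0.
have sum0 : \sum_i x i 0 ^+ 2 = 0.
  by apply/eqP; rewrite eq_le sum_le0 sumr_ge0 // => i _; exact: sqr_ge0.
apply/matrixP => i j; rewrite ord1 mxE; apply/eqP.
by rewrite -sqrf_eq0 (psumr_eq0P (fun i _ => sqr_ge0 (x i 0)) sum0).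
Qed.

Lemma vnormZ (c : R) x : vnorm (c *: x) = `|c| * vnorm x.
Proof.
rewrite /vnorm -sqrtr_sqr -sqrtrM ?sqr_ge0 // mulr_sumr.
by congr Num.sqrt; apply: eq_bigr => i _; rewrite mxE exprMn.
Qed.

Lemma norm_coord_le_vnorm x j : `|x j 0| <= vnorm x.
Proof.
rewrite -sqrtr_sqr ler_sqrt ?sumr_ge0 // => [|i _]; last exact: sqr_ge0.
by rewrite (bigD1 j) //= lerDl sumr_ge0 // => i _; exact: sqr_ge0.
Qed.

Lemma vnorm_le_sum_norm x : vnorm x <= \sum_i `|x i 0|.
Proof.
rewrite -(ger0_norm (sumr_ge0 _ (fun i _ => normr_ge0 (x i 0)))) -sqrtr_sqr.
by rewrite ler_sqrt ?sqr_ge0 // sum_sqr_le_sqr_sum_norm.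
Qed.

Lemma vnorm_mulmx_le_sum_norm A x :
  vnorm (A *m x) <= (\sum_i \sum_j `|A i j|) * vnorm x.
Proof.
apply: le_trans (vnorm_le_sum_norm _) _; rewrite mulr_suml.
apply: ler_sum => i _; rewrite mxE mulr_suml.
apply: le_trans (ler_norm_sum _ _ _) _; apply: ler_sum => j _.
by rewrite normrM ler_wpM2l ?norm_coord_le_vnorm.
Qed.

Let unit_sphere_image A :=
  [set vnorm (A *m x) | x in [set x : 'cV[R]_n | vnorm x = 1]].

Lemma spec_norm_has_ubound A : has_ubound (unit_sphere_image A).
Proof.
exists (\sum_i \sum_j `|A i j|) => _ [x x1 <-].
by rewrite -[leRHS]mulr1 -x1 vnorm_mulmx_le_sum_norm.
Qed.

Lemma spec_norm_ge0 A : 0 <= spec_norm A.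
Proof.
rewrite /spec_norm -/(unit_sphere_image A).
have [->|/set0P [y Sy]] := eqVneq (unit_sphere_image A) set0; first by rewrite sup0.
apply: le_trans (ub_le_sup (spec_norm_has_ubound A) Sy).
by case: Sy => x _ <-; exact: vnorm_ge0.
Qed.

Lemma vnorm_mulmx_le A u : vnorm (A *m u) <= spec_norm A * vnorm u.
Proof.
have [u0|u_neq0] := eqVneq (vnorm u) 0.
  by rewrite u0 mulr0 (vnorm_eq0 u0) mulmx0 vnorm0.
have u_gt0 : 0 < vnorm u by rewrite lt_def u_neq0 vnorm_ge0.
have inv_ge0 : 0 <= (vnorm u)^-1 by rewrite invr_ge0 vnorm_ge0.
have w1 : vnorm ((vnorm u)^-1 *: u) = 1 by rewrite vnormZ ger0_norm // mulVf.
have := ub_le_sup (spec_norm_has_ubound A) (imageP (fun x => vnorm (A *m x)) w1).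
by rewrite -scalemxAr vnormZ ger0_norm // ler_pdivrMl // mulrC.
Qed.

Lemma spd_unitmx A : spd A -> A \in unitmx.
Proof.
case=> _ posA; rewrite unitmxE unitfE; apply/negP => /det0P [v v_neq0 vA].
have /posA : v^T != 0 by rewrite trmx_eq0.
by rewrite /qform trmxK vA mul0mx mxE ltxx.
Qed.

Lemma invmx_sqr P : P \in unitmx -> invmx (P *m P) = invmx P *m invmx P.
Proof.
move=> uP; have uPP : P *m P \in unitmx by rewrite unitmx_mul uP.
have PP_inv : (P *m P) *m (invmx P *m invmx P) = 1%:M.
  by rewrite mulmxA mulmxK // mulmxV.
by rewrite -[LHS]mulmx1 -PP_inv mulmxA mulVmx // mul1mx.
Qed.

Lemma ellipsoid_sqrtmE Q P u :
  is_sqrtm Q P -> ellipsoid Q (P *m u) <-> vnorm u <= 1.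
Proof.
move=> [spdP <-]; have [symP _] := spdP; move/spd_unitmx: spdP => uP.
rewrite /ellipsoid /qform /= invmx_sqr //.
rewrite trmx_mul symP !mulmxA mulmxK // mulmxKV // -vnorm_sqr.
by rewrite expr_le1 ?vnorm_ge0.
Qed.

Lemma dist_pt_set_le x (B : set 'cV[R]_n) y :
  B y -> dist_pt_set x B <= vnorm (x - y).
Proof.
move=> By; apply: ge_inf; last exact: imageP.
by exists 0 => _ [z _ <-]; exact: vnorm_ge0.
Qed.

Lemma hausdorff_le (A B : set 'cV[R]_n) (c : R) : 0 <= c ->
  (forall x, A x -> exists2 y, B y & vnorm (x - y) <= c) ->
  (forall y, B y -> exists2 x, A x & vnorm (y - x) <= c) ->
  hausdorff A B <= c.
Proof.
move=> c_ge0 nearAB nearBA; rewrite /hausdorff ge_max.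
apply/andP; split; apply: sup_le_ge0 => // _ [x Ax <-].
  by have [y By xy_le] := nearAB x Ax; exact: le_trans (dist_pt_set_le x By) xy_le.
by have [y By xy_le] := nearBA x Ax; exact: le_trans (dist_pt_set_le x By) xy_le.
Qed.

End Norms.

Lemma minkowski_ellipsoids_sqrtm (R : realType) (n t : nat)
    (M sqM : 'I_t.+1 -> 'M[R]_n) (u : 'cV[R]_n) :
  (forall k, is_sqrtm (M k) (sqM k)) -> vnorm u <= 1 ->
  minkowski_ellipsoids M (\sum_k sqM k *m u).
Proof.
by move=> sqrtM u1; exists (fun k => sqM k *m u); split=> // k; apply/ellipsoid_sqrtmE.
Qed.

Theorem proposition1 (R : realType) (n t : nat) (hn : (0 < n)%N)
  (M : 'I_t.+1 -> 'M[R]_n) (Qh : 'M[R]_n)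
  (sqM : 'I_t.+1 -> 'M[R]_n) (sqQh : 'M[R]_n) :
  (forall k, spd (M k)) -> spd Qh ->
  (forall k, is_sqrtm (M k) (sqM k)) -> is_sqrtm Qh sqQh ->
  minkowski_ellipsoids M `<=` ellipsoid Qh ->
  hausdorff (minkowski_ellipsoids M) (ellipsoid Qh)
    <= spec_norm (sqQh - \sum_k sqM k).
Proof.
move=> _ _ sqrtM sqrtQ subXE.
apply: hausdorff_le; first exact: spec_norm_ge0.
  by move=> x Xx; exists x; [exact: subXE | rewrite subrr vnorm0 spec_norm_ge0].
move=> y Ey; have uQ : sqQh \in unitmx by case: sqrtQ => /spd_unitmx.
pose u := invmx sqQh *m y.
have yE : y = sqQh *m u by rewrite mulKVmx.
have u1 : vnorm u <= 1 by rewrite -(ellipsoid_sqrtmE u sqrtQ) -yE.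
exists (\sum_k sqM k *m u); first exact: minkowski_ellipsoids_sqrtm.
rewrite {1}yE -mulmx_suml -mulmxBl.
by apply: le_trans (vnorm_mulmx_le _ _) _; rewrite ler_piMr ?spec_norm_ge0.
Qed.
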